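(* Let $\tau\ge 0$ be an integer, $\mathcal D=\{0,1,\dots,\tau\}$, let $\{\tau_n\}_{n\in\mathbb Z}$ be an i.i.d. sequence of random variables with values in $\mathcal D$ and $\Pr\{\tau_n=i\}=p_i$ ($\sum_{i=0}^\tau p_i=1$), and let $\alpha_0,\dots,\alpha_\tau$ be real numbers. For integers $k,n$ define $$\omega(k,n)=\begin{cases}\alpha_{k-n}\big[\delta(\tau_n-(k-n))-p_{k-n}\big], & n\le k\le n+\tau,\\ 0,&\text{otherwise},\end{cases}$$ where $\delta$ is the Kronecker delta. For a fixed $n$ define $r(l)=\mathbb E\big\{\sum_{k=-\infty}^{\infty}\omega(k,n)\omega(k+l,n)\big\}$ for $l\in\mathbb Z$ and $S_\Omega(z)=\sum_{l=-\infty}^{\infty} r(l)z^{-l}$. Then $$S_\Omega(z)=\frac12\sum_{i_1,i_2=0}^{\tau}\big(\alpha_{i_1}z^{i_1}-\alpha_{i_2}z^{i_2}\big)\big(\alpha_{i_1}z^{-i_1}-\alpha_{i_2}z^{-i_2}\big)p_{i_1}p_{i_2}.$$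
   Context: $\omega(k,n)$ is the deviation of the (random) impulse response of a channel with random transmission delays from its mean; $S_\Omega$ is called the energy spectral density of the channel uncertainty. *)

From HB Require Import structures.
From mathcomp Require Import all_boot all_order all_algebra.
From mathcomp Require Import all_classical all_reals all_analysis.
From mathcomp Require Import complex.
Set Implicit Arguments. Unset Strict Implicit. Unset Printing Implicit Defensive.
Import Order.TTheory GRing.Theory Num.Theory.
Local Open Scope classical_set_scope.
Local Open Scope ring_scope.

Definition discrete_mutual_indep d (T : measurableType d) (R : realType)
    (P : probability T R) (tau : int -> T -> nat) : Prop :=
  forall (s : seq int) (v : int -> nat), uniq s ->
    P (\bigcap_(j in [set` s]) (tau j @^-1` [set v j])) =
    (\prod_(j <- s) P (tau j @^-1` [set v j]))%E.

Definition omega d (T : measurableType d) (R : realType)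
    (dmax : nat) (alpha p : nat -> R) (tau : int -> T -> nat)
    (k n : int) (x : T) : R :=
  if (n <= k) && (k <= n + dmax%:Z) then
    let i := `|k - n|%N in
    alpha i * ((tau n x == i)%:R - p i)
  else 0.

(* r(l) = E{ sum_{k in Z} omega(k,n) omega(k+l,n) }  (the sum over all of Z
   is the finitely-supported sum of fsbigop) *)
Definition corr d (T : measurableType d) (R : realType) (P : probability T R)
    (dmax : nat) (alpha p : nat -> R) (tau : int -> T -> nat)
    (n l : int) : R :=
  fine ('E_P[(fun x => \sum_(k \in [set: int])
                 omega dmax alpha p tau k n x * omega dmax alpha p tau (k + l) n x)%R])%E.

Definition S_Omega d (T : measurableType d) (R : realType) (P : probability T R)
    (dmax : nat) (alpha p : nat -> R) (tau : int -> T -> nat)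
    (n : int) (z : R[i]) : R[i] :=
  \sum_(l \in [set: int]) ((corr P dmax alpha p tau n l)%:C)%C * z ^ (- l).

From HB Require Import structures.
From mathcomp Require Import all_boot all_order all_algebra.
From mathcomp Require Import all_classical all_reals all_analysis.
From mathcomp Require Import complex.
From mathcomp Require Import zify ring.
Set Implicit Arguments. Unset Strict Implicit. Unset Printing Implicit Defensive.
Import Order.TTheory GRing.Theory Num.Theory.
Local Open Scope classical_set_scope.
Local Open Scope ring_scope.

(* Only the law of the single delay tau_n matters.  The impulse response
   deviation omega(., n) is supported on n, ..., n + tau, with
   omega(n + i, n) = alpha_i (1{tau_n = i} - p_i), so
   r(l) = sum_(j - i = l) c_ij, where c_ij = alpha_i alpha_j (delta_ij p_i - p_i p_j)
   is the covariance of the centred taps, and S_Omega(z) = sum_(i,j) c_ij z^(i - j).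
   Symmetrising this double sum in (i, j), using sum_i p_i = 1, gives the
   stated form. *)

Lemma sum_ord_indicator (R : pzSemiRingType) (D t : nat) (g : nat -> R) :
  (t <= D)%N -> \sum_(v < D.+1) (v == t :> nat)%:R * g v = g t.
Proof.
move=> tD; rewrite (bigD1 (Ordinal (tD : (t < D.+1)%N))) //= eqxx mul1r.
by rewrite big1 ?addr0 // => v; rewrite -val_eqE => /negbTE ->; rewrite mul0r.
Qed.

Lemma fsumT_indicator (T : choiceType) (I : finType) (V : pzSemiRingType)
    (f : I -> T) (G : I -> T -> V) :
  \sum_(k \in [set: T]) \sum_(i : I) (k == f i)%:R * G i k = \sum_(i : I) G i (f i).
Proof.
pose r := undup (codom f).
have r_f i : f i \in r by rewrite mem_undup codom_f.
rewrite (fsbigE r) ?undup_uniq //; last first.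
  move=> k _ kr; apply: big1 => i _.
  by case: eqP => [kf | _]; [move: kr; rewrite kf r_f | rewrite mul0r].
under eq_bigl do rewrite in_setT.
rewrite exchange_big; apply: eq_bigr => i _.
rewrite (bigD1_seq (f i)) ?undup_uniq //= eqxx mul1r big1 ?addr0 // => k.
by move/negbTE ->; rewrite mul0r.
Qed.

Lemma sum_centered_indicator_cov (R : comNzRingType) (D i j : nat) (p : nat -> R) :
  \sum_(v < D.+1) p v = 1 -> (i <= D)%N -> (j <= D)%N ->
  \sum_(v < D.+1) ((v == i :> nat)%:R - p i) * ((v == j :> nat)%:R - p j) * p v =
  (i == j)%:R * p i - p i * p j.
Proof.
move=> p1 iD jD.
transitivity (\sum_(v < D.+1)
    ((v == i :> nat)%:R * ((v == j :> nat)%:R * p v) - p j * ((v == i :> nat)%:R * p v)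
     - p i * ((v == j :> nat)%:R * p v) + p i * p j * p v)).
  by apply: eq_bigr => v _; ring.
rewrite big_split !sumrB /= -!mulr_sumr.
rewrite (sum_ord_indicator (fun v => (v == j :> nat)%:R * p v)) //.
by rewrite !sum_ord_indicator // p1; ring.
Qed.

Lemma expectation_finite_law d (T : measurableType d) (R : realType)
    (P : probability T R) (D : nat) (p : nat -> R) (X : T -> nat)
    (X_range : forall x, (X x <= D)%N)
    (X_meas : forall v, measurable (X @^-1` [set v]))
    (X_law : forall v, (v <= D)%N -> P (X @^-1` [set v]) = (p v)%:E)
    (g : nat -> R) :
  ('E_P[fun x => g (X x)] = (\sum_(v < D.+1) g v * p v)%:E)%E.
Proof.
have -> : (fun x => g (X x)) =
    (fun x => \sum_(v < D.+1) g v * \1_(X @^-1` [set (v : nat)]) x).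
  apply: funext => x; rewrite -(sum_ord_indicator g (X_range x)).
  have inX v : (v == X x) = (x \in X @^-1` [set v]).
    by apply/eqP/idP => [-> | /set_mem ->]; first exact: mem_set.
  by apply: eq_bigr => v _; rewrite indicE inX mulrC.
rewrite unlock; under eq_integral do rewrite -sumEFin.
rewrite integral_sum //; last first.
  by move=> v; under eq_fun do rewrite EFinM; exact/integrableZl/integrable_indic.
rewrite -sumEFin; apply: eq_bigr => v _.
under eq_integral do rewrite EFinM.
rewrite integralZl; last exact: integrable_indic.
rewrite integral_indic //.
  by rewrite setIT EFinM; congr (_ * _)%E; exact: X_law (ltn_ord v).
exact: measurableT.
Qed.

Lemma sum_cov_ratio_symmetrize (C : numFieldType) (D : nat) (A P u : nat -> C) :
  (forall i, u i != 0) -> \sum_(i < D.+1) P i = 1 ->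
  \sum_(i < D.+1) \sum_(j < D.+1)
     A i * A j * ((i == j :> nat)%:R * P i - P i * P j) * (u i / u j) =
  2^-1 * \sum_(i < D.+1) \sum_(j < D.+1)
     (A i * u i - A j * u j) * (A i / u i - A j / u j) * P i * P j.
Proof.
move=> u_neq0 P1.
pose f (i j : nat) := A i ^+ 2 * P i * P j - A i * A j * P i * P j * (u i / u j).
pose Q := \sum_(i < D.+1) \sum_(j < D.+1) A i * A j * P i * P j * (u i / u j).
have sum_fE : \sum_(i < D.+1) \sum_(j < D.+1) f i j =
              \sum_(i < D.+1) A i ^+ 2 * P i - Q.
  rewrite -sumrB; apply: eq_bigr => i _.
  by rewrite /f sumrB -mulr_sumr P1 mulr1.
have -> : \sum_(i < D.+1) \sum_(j < D.+1)
    A i * A j * ((i == j :> nat)%:R * P i - P i * P j) * (u i / u j) =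
    \sum_(i < D.+1) A i ^+ 2 * P i - Q.
  rewrite -sumrB; apply: eq_bigr => i _.
  transitivity (\sum_(j < D.+1) ((j == i :> nat)%:R * (A i * A j * P i * (u i / u j))
                                 - A i * A j * P i * P j * (u i / u j))).
    by apply: eq_bigr => j _; rewrite eq_sym; ring.
  have iD : (i <= D)%N by rewrite -ltnS.
  rewrite sumrB (sum_ord_indicator (fun j => A i * A j * P i * (u i / u j)) iD).
  by rewrite mulfV // mulr1 expr2.
have -> : \sum_(i < D.+1) \sum_(j < D.+1)
    (A i * u i - A j * u j) * (A i / u i - A j / u j) * P i * P j =
    \sum_(i < D.+1) \sum_(j < D.+1) (f i j + f j i).
  apply: eq_bigr => i _; apply: eq_bigr => j _.
  by rewrite /f; field; rewrite !u_neq0.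
have sum_sym : \sum_(i < D.+1) \sum_(j < D.+1) (f i j + f j i) =
                (\sum_(i < D.+1) \sum_(j < D.+1) f i j) *+ 2.
  under eq_bigr do rewrite big_split.
  by rewrite big_split /= [X in _ + X]exchange_big.
by rewrite sum_sym sum_fE -[X in _ = _ * X]mulr_natl mulKf // pnatr_eq0.
Qed.

Section Channel.
Variables (d : measure_display) (T : measurableType d) (R : realType).
Variables (dmax : nat) (alpha p : nat -> R) (tau : int -> T -> nat).

Definition tap_dev (v i : nat) : R := alpha i * ((v == i)%:R - p i).

Definition tap_cov (i j : nat) : R :=
  alpha i * alpha j * ((i == j)%:R * p i - p i * p j).

Lemma omegaE (k n : int) (x : T) :
  omega dmax alpha p tau k n x =
  \sum_(i < dmax.+1) (k == n + i%:Z)%:R * tap_dev (tau n x) i.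
Proof.
rewrite /omega; case: ifPn => [/andP[nk kn] | outside].
  have kD : (`|k - n| <= dmax)%N by lia.
  transitivity (tap_dev (tau n x) `|k - n|%N); first by [].
  rewrite -(sum_ord_indicator (tap_dev (tau n x)) kD); apply: eq_bigr => i _.
  by congr (_%:R * _); apply/eqP/eqP; lia.
rewrite big1 // => i _; case: eqP => [kE | _]; last by rewrite mul0r.
by move: outside; rewrite kE; have := ltn_ord i; lia.
Qed.

Lemma omega_lag_sum (n l : int) (x : T) :
  \sum_(k \in [set: int])
     omega dmax alpha p tau k n x * omega dmax alpha p tau (k + l) n x =
  \sum_(i < dmax.+1) \sum_(j < dmax.+1)
     (l == j%:Z - i%:Z)%:R * (tap_dev (tau n x) i * tap_dev (tau n x) j).
Proof.
under eq_fsbigr => k _.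
  by rewrite omegaE mulr_suml; under eq_bigr do rewrite -mulrA; over.
rewrite fsumT_indicator; apply: eq_bigr => i _.
rewrite omegaE mulr_sumr; apply: eq_bigr => j _.
have -> : (n + i%:Z + l == n + j%:Z) = (l == j%:Z - i%:Z) by apply/eqP/eqP; lia.
by rewrite mulrCA.
Qed.

Variable P : probability T R.
Hypothesis p_sum1 : \sum_(i < dmax.+1) p i = 1.
Hypothesis tau_range : forall n x, (tau n x <= dmax)%N.
Hypothesis tau_meas : forall n i, measurable (tau n @^-1` [set i]).
Hypothesis tau_law :
  forall n i, (i <= dmax)%N -> P (tau n @^-1` [set i]) = (p i)%:E.

Lemma corrE (n l : int) :
  corr P dmax alpha p tau n l =
  \sum_(i < dmax.+1) \sum_(j < dmax.+1) (l == j%:Z - i%:Z)%:R * tap_cov i j.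
Proof.
pose G v := \sum_(i < dmax.+1) \sum_(j < dmax.+1)
  (l == j%:Z - i%:Z)%:R * (tap_dev v i * tap_dev v j).
rewrite /corr (_ : (fun x => _) = G \o tau n); last exact/funext/omega_lag_sum.
rewrite (expectation_finite_law (tau_range n) (tau_meas n) (tau_law n)) /= /G.
under eq_bigr do rewrite mulr_suml; rewrite exchange_big; apply: eq_bigr => i _.
under eq_bigr do rewrite mulr_suml; rewrite exchange_big; apply: eq_bigr => j _.
rewrite /tap_cov -(sum_centered_indicator_cov p_sum1 (ltn_ord i) (ltn_ord j)).
by rewrite !mulr_sumr; apply: eq_bigr => v _; rewrite /tap_dev; ring.
Qed.

Lemma S_OmegaE (n : int) (z : R[i]) :
  S_Omega P dmax alpha p tau n z =
  \sum_(i < dmax.+1) \sum_(j < dmax.+1) ((tap_cov i j)%:C)%C * z ^ (i%:Z - j%:Z).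
Proof.
rewrite /S_Omega.
under eq_fsbigr => l _.
  rewrite corrE pair_bigA rmorph_sum mulr_suml.
  by under eq_bigr do rewrite rmorphM rmorph_nat -mulrA; over.
rewrite fsumT_indicator [RHS]pair_bigA.
by apply: eq_bigr => -[i j] _ /=; rewrite opprB.
Qed.

End Channel.

Theorem lemma2 (d : measure_display) (T : measurableType d) (R : realType)
    (P : probability T R) (dmax : nat) (p alpha : nat -> R)
    (tau : int -> T -> nat)
    (hp0 : forall i, (i <= dmax)%N -> 0 <= p i)
    (hp1 : \sum_(i < dmax.+1) p i = 1)
    (htau_range : forall n x, (tau n x <= dmax)%N)
    (htau_meas : forall n i, measurable (tau n @^-1` [set i]))
    (htau_law : forall n i, (i <= dmax)%N -> P (tau n @^-1` [set i]) = (p i)%:E)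
    (htau_indep : discrete_mutual_indep P tau)
    (n : int) (z : R[i]) (hz : z != 0) :
  S_Omega P dmax alpha p tau n z =
  2^-1 * \sum_(i1 < dmax.+1) \sum_(i2 < dmax.+1)
     (((alpha i1)%:C)%C * z ^+ i1 - ((alpha i2)%:C)%C * z ^+ i2) *
     (((alpha i1)%:C)%C * z ^- i1 - ((alpha i2)%:C)%C * z ^- i2) *
     ((p i1)%:C)%C * ((p i2)%:C)%C.
Proof.
have pC_sum1 : \sum_(i < dmax.+1) ((p i)%:C)%C = 1 :> R[i].
  by rewrite -rmorph_sum hp1.
rewrite (S_OmegaE alpha hp1 htau_range htau_meas htau_law).
rewrite -(@sum_cov_ratio_symmetrize _ dmax (fun i => ((alpha i)%:C)%C)
  (fun i => ((p i)%:C)%C) (fun i => z ^+ i) (fun i => expf_neq0 i hz) pC_sum1) /=.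
apply: eq_bigr => i _; apply: eq_bigr => j _.
rewrite /tap_cov !rmorphM rmorphB !rmorphM rmorph_nat.
by rewrite expfzDr // -invr_expz.
Qed.
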